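(* For all integers $1\le k\le n$, the probability (under $\mathbb{P}_n$) that the $k$-th boundary step of a type-B permutation tableau of size $n$ is a west step and the diagonal cell of the column corresponding to this step contains a $1$ equals $\dfrac12$.
   Context: A Ferrers diagram is a left-justified array of cells whose row lengths weakly decrease from top to bottom (rows of length $0$ are allowed). Its half-perimeter is the number of rows plus the number of columns. Its southeast boundary, traversed from the northeast corner to the southwest corner, consists of $n$ unit steps, each south or west; south steps correspond to rows and west steps to columns. If the diagram has $c$ columns, the shifted Ferrers diagram is obtained by inserting $c$ new left-justified rows above it, of lengths $c,c-1,\dots,1$ from top to bottom; the rightmost cell of each inserted row is a diagonal cell, and each column contains exactly one diagonal cell. A type-B permutation tableau of size $n$ is a filling of a shifted Ferrers diagram of half-perimeter $n$ with $0$'s and $1$'s such that: (1) every column contains at least one $1$; (2) no $0$ has both a $1$ above it in its column and a $1$ to its left in its row; (3) if a diagonal cell contains $0$ then every cell of its row contains $0$. Let $\mathcal{B}_n$ be the set of such tableaux and $\mathbb{P}_n$ the uniform probability measure on $\mathcal{B}_n$. *)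

From mathcomp Require Import all_boot all_order all_algebra.
Set Implicit Arguments. Unset Strict Implicit. Unset Printing Implicit Defensive.

(* Boundary steps are indexed by 'I_n (0-based,
   step number i+1 in the paper), traversed from the NE corner to the SW corner.
   w i = true  : step i is a West step (a column);
   w i = false : step i is a South step (a row of the Ferrers diagram).

   Rows of the shifted diagram are indexed by steps as well:
   - a South step i indexes the original row of that step;
   - a West step d indexes the inserted row whose rightmost (diagonal) cell
     lies in the column of step d.
   Columns are indexed by West steps j.
   The diagonal cell of column j is (j, j). *)

Definition word n := {ffun 'I_n -> bool}.
Definition filling n := {ffun 'I_n * 'I_n -> bool}.

Definition in_diag n (w : word n) (r j : 'I_n) : bool := w j && (r <= j).

Definition row_above n (w : word n) (r r' : 'I_n) : bool :=
  (w r && ~~ w r') || (w r && w r' && (r' < r)) || (~~ w r && ~~ w r' && (r < r')).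

(* In a given row, the cell in column j' is to the left of the cell in column j
   iff j' > j (columns further along the boundary path are further west). *)

Definition typeB_tableau n (t : word n * filling n) : bool :=
  let w := t.1 in let F := t.2 in
  [&&
      [forall r : 'I_n, forall j : 'I_n, ~~ in_diag w r j ==> ~~ F (r, j)],
      [forall j : 'I_n, w j ==> [exists r : 'I_n, in_diag w r j && F (r, j)]],
      (* (2) no 0 with a 1 above it in its column and a 1 to its left in its row *)
      [forall r : 'I_n, forall j : 'I_n,
         (in_diag w r j && ~~ F (r, j)) ==>
         ~~ ([exists r' : 'I_n, [&& in_diag w r' j, row_above w r' r & F (r', j)]]
             && [exists j' : 'I_n, [&& in_diag w r j', j < j' & F (r, j')]])]
    &
      [forall j : 'I_n, (w j && ~~ F (j, j)) ==>
         [forall j' : 'I_n, in_diag w j j' ==> ~~ F (j, j')]]].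

Definition B_set n : {set word n * filling n} := [set t | typeB_tableau t].

Definition west_diag1 n (k : 'I_n) : {set word n * filling n} :=
  [set t in B_set n | t.1 k && t.2 (k, k)].

Definition probB n (E : {set word n * filling n}) : rat :=
  (#|E :&: B_set n|%:R / #|B_set n|%:R)%R.

From mathcomp Require Import all_boot all_order all_algebra.
From mathcomp Require Import zify.
Set Implicit Arguments. Unset Strict Implicit. Unset Printing Implicit Defensive.
Import GRing.Theory Num.Theory.

(* We argue by induction on n, peeling off the LAST
   boundary step (at the south-west corner, index ord_max).  A tableau of
   size n+1 is the same thing as a tableau T of size n together with
   admissible "extension data" (b, d, C): b says whether the last step is
   West, d is the diagonal entry of the new (leftmost) column, and C is the
   set of old rows holding a 1 in that column.  The data are admissible when
   they are (false, false, set0), or b = true, d || C != set0, and C consists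
   of FREE rows of T (rows that may receive a 1 in a new leftmost column).
   The number nfree t of free rows drives the induction: nfree of an
   extension is computed from T and (b, d, C), and a combinatorial identity
   (sum_extensions_upper_count) shows that for every weight g the sum of
   g (nfree) over the extensions with b && d is half the sum over all
   extensions.  By induction on n we then get, for every weight g,
       2 * sum_{t in event k} g (nfree t) = sum_{t in B_n} g (nfree t):
   for k = ord_max this is the fiber computation, and for an earlier k both
   fiber sums are functions of nfree T, so the identity for n applies with a
   new weight.  Taking g = 1 gives |B_n| = 2 |event k|. *)

Lemma forall_liftE n (P : pred 'I_n.+1) :
  [forall i, P i] = [forall j : 'I_n, P (lift ord_max j)] && P ord_max.
Proof.
apply/forallP/andP => [H|[/forallP H1 H2] i]; first by split => //; apply/forallP.
by case: (unliftP ord_max i) => [j|] ->.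
Qed.

Lemma exists_liftE n (P : pred 'I_n.+1) :
  [exists i, P i] = [exists j : 'I_n, P (lift ord_max j)] || P ord_max.
Proof.
apply/existsP/orP => [[i]|[/existsP[j Hj]|H]].
- by case: (unliftP ord_max i) => [j|] -> H; [left; apply/existsP; exists j|right].
- by exists (lift ord_max j).
- by exists ord_max.
Qed.

Lemma card_liftE n (P : pred 'I_n.+1) :
  #|[set i | P i]| = #|[set j : 'I_n | P (lift ord_max j)]| + P ord_max.
Proof.
rewrite !cardsE -!sum1_card !big_mkcond /= big_ord_recr /=; congr (_ + _).
rewrite [RHS]big_mkcond; apply: eq_bigr => j _.
by rewrite (_ : widen_ord _ j = lift ord_max j) //; apply: val_inj; rewrite /= /bump leqNgt ltn_ord.
Qed.

Lemma forall_andb (T : finType) (P Q : pred T) :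
  [forall x, P x && Q x] = [forall x, P x] && [forall x, Q x].
Proof.
apply/forallP/andP => [H|[/forallP H1 /forallP H2] x]; last by rewrite H1 H2.
by split; apply/forallP => x; case/andP: (H x).
Qed.

Lemma forall_trueb (T : finType) : [forall x : T, true] = true.
Proof. by apply/forallP. Qed.

Lemma implyb_andr x y z : (x ==> y && z) = (x ==> y) && (x ==> z).
Proof. by case: x. Qed.

Definition supported n (t : word n * filling n) :=
  [forall r : 'I_n, forall j : 'I_n, ~~ in_diag t.1 r j ==> ~~ t.2 (r, j)].
Definition columns_nonzero n (t : word n * filling n) :=
  [forall j : 'I_n, t.1 j ==> [exists r : 'I_n, in_diag t.1 r j && t.2 (r, j)]].

Definition one_above n (t : word n * filling n) (r j : 'I_n) :=
  [exists r' : 'I_n, [&& in_diag t.1 r' j, row_above t.1 r' r & t.2 (r', j)]].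
Definition one_left n (t : word n * filling n) (r j : 'I_n) :=
  [exists j' : 'I_n, [&& in_diag t.1 r j', j < j' & t.2 (r, j')]].

Definition zero_ok n (t : word n * filling n) (r j : 'I_n) :=
  (in_diag t.1 r j && ~~ t.2 (r, j)) ==> ~~ (one_above t r j && one_left t r j).
Definition zeros_ok n (t : word n * filling n) :=
  [forall r, forall j, zero_ok t r j].
Definition diagonal_ok n (t : word n * filling n) :=
  [forall j : 'I_n, (t.1 j && ~~ t.2 (j, j)) ==>
     [forall j' : 'I_n, in_diag t.1 j j' ==> ~~ t.2 (j, j')]].

Lemma typeBE n (t : word n * filling n) :
  typeB_tableau t = [&& supported t, columns_nonzero t, zeros_ok t & diagonal_ok t].
Proof. by []. Qed.

(* Row r is FREE when a 1 may be put in row r of a new leftmost column: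
   its diagonal cell (if r is a West step) holds a 1, and none of its 0's
   has a 1 above it (the new 1 would lie to the left of all of them). *)
Definition clear_above n (t : word n * filling n) (r : 'I_n) :=
  [forall j : 'I_n, (in_diag t.1 r j && ~~ t.2 (r, j)) ==> ~~ one_above t r j].
Definition free_row n (t : word n * filling n) (r : 'I_n) :=
  (t.1 r ==> t.2 (r, r)) && clear_above t r.

Definition free_rows n (t : word n * filling n) : {set 'I_n} := [set r | free_row t r].

Definition nfree n (t : word n * filling n) : nat := #|free_rows t|.

(* Extension data for the last step: is it West, its diagonal entry, and
   the set of old rows with a 1 in its column. *)
Notation ext_data n := (bool * bool * {set 'I_n})%type.

Section Extension.
Variable n : nat.
Local Notation old := (lift (@ord_max n)).

Definition restrict (t : word n.+1 * filling n.+1) : word n * filling n :=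
  ([ffun j => t.1 (old j)], [ffun p => t.2 (old p.1, old p.2)]).

Definition last_data (t : word n.+1 * filling n.+1) : ext_data n :=
  (t.1 ord_max, t.2 (ord_max, ord_max), [set r | t.2 (old r, ord_max)]).

Definition extend_word (T : word n * filling n) (b : bool) : word n.+1 :=
  [ffun i => if unlift ord_max i is Some j then T.1 j else b].

Definition extend_filling (T : word n * filling n) (b d : bool) (C : {set 'I_n}) :
    filling n.+1 :=
  [ffun p => match unlift ord_max p.1, unlift ord_max p.2 with
     | Some r, Some j => T.2 (r, j)
     | Some r, None => b && (r \in C)
     | None, None => b && d
     | None, Some _ => false end].

Definition extend (T : word n * filling n) (e : ext_data n) :=
  (extend_word T e.1.1, extend_filling T e.1.1 e.1.2 e.2).

Lemma old_val (j : 'I_n) : (old j : nat) = j. Proof. exact: lift_max. Qed.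

Variables (T : word n * filling n) (b d : bool) (C : {set 'I_n}).
Local Notation w := (extend_word T b).
Local Notation F := (extend_filling T b d C).

(* Evaluation of the extended word, filling, diagram and row order; the
   suffix letters o/l tell whether each argument is an old step or the last. *)
Lemma wordE_o (j : 'I_n) : w (old j) = T.1 j.
Proof. by rewrite ffunE liftK. Qed.
Lemma wordE_l : w ord_max = b.
Proof. by rewrite ffunE unlift_none. Qed.

Lemma fillE_oo (r j : 'I_n) : F (old r, old j) = T.2 (r, j).
Proof. by rewrite ffunE /= !liftK. Qed.
Lemma fillE_ol (r : 'I_n) : F (old r, ord_max) = b && (r \in C).
Proof. by rewrite ffunE /= liftK unlift_none. Qed.
Lemma fillE_lo (j : 'I_n) : F (ord_max, old j) = false.
Proof. by rewrite ffunE /= liftK unlift_none. Qed.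
Lemma fillE_ll : F (ord_max, ord_max) = b && d.
Proof. by rewrite ffunE /= unlift_none. Qed.

Lemma diagE_oo (r j : 'I_n) : in_diag w (old r) (old j) = in_diag T.1 r j.
Proof. by rewrite /in_diag wordE_o !old_val. Qed.
Lemma diagE_ol (r : 'I_n) : in_diag w (old r) ord_max = b.
Proof. by rewrite /in_diag wordE_l old_val /= ltnW ?andbT. Qed.
Lemma diagE_lo (j : 'I_n) : in_diag w ord_max (old j) = false.
Proof. by rewrite /in_diag wordE_o old_val /= leqNgt ltn_ord andbF. Qed.
Lemma diagE_ll : in_diag w ord_max ord_max = b.
Proof. by rewrite /in_diag wordE_l leqnn andbT. Qed.

Lemma aboveE_oo (r r' : 'I_n) : row_above w (old r) (old r') = row_above T.1 r r'.
Proof. by rewrite /row_above !wordE_o !old_val. Qed.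
Lemma aboveE_lo (r : 'I_n) : row_above w ord_max (old r) = b.
Proof.
rewrite /row_above wordE_l wordE_o old_val /= ltn_ord ltnNge (ltnW (ltn_ord r)).
by case: b; case: (T.1 r).
Qed.
Lemma aboveE_ol (r : 'I_n) : row_above w (old r) ord_max = ~~ b.
Proof.
rewrite /row_above wordE_l wordE_o old_val /= ltn_ord ltnNge (ltnW (ltn_ord r)).
by case: b; case: (T.1 r).
Qed.
Lemma aboveE_ll : row_above w ord_max ord_max = false.
Proof. by rewrite /row_above ltnn; case: (w ord_max). Qed.

Lemma ltE_oo (j j' : 'I_n) : (old j < old j') = (j < j'). Proof. by rewrite !old_val. Qed.
Lemma ltE_ol (j : 'I_n) : (old j < @ord_max n) = true. Proof. by rewrite old_val /= ltn_ord. Qed.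
Lemma ltE_lo (j : 'I_n) : (@ord_max n < old j) = false.
Proof. by rewrite old_val /= ltnNge ltnW. Qed.

End Extension.

Section ExtensionConditions.
Variable n : nat.
Local Notation old := (lift (@ord_max n)).
Variables (T : word n * filling n) (b d : bool) (C : {set 'I_n}).
Local Notation E := (extend T (b, d, C)).

Lemma supported_extend : supported E = supported T.
Proof.
rewrite /supported /= forall_liftE.
under eq_forallb => r do
  [rewrite forall_liftE; under eq_forallb => j do rewrite diagE_oo fillE_oo;
   rewrite diagE_ol fillE_ol].
rewrite forall_liftE diagE_ll fillE_ll.
under [X in _ && (X && _)]eq_forallb => j do rewrite diagE_lo fillE_lo.
rewrite forall_trueb /= forall_andb.
by case: b => /=; rewrite forall_trueb ?andbT.
Qed.

Lemma columns_nonzero_extend :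
  columns_nonzero E = columns_nonzero T && (b ==> (d || [exists r, r \in C])).
Proof.
rewrite /columns_nonzero /= forall_liftE.
under eq_forallb => j do
  [rewrite wordE_o exists_liftE; under eq_existsb => r do rewrite diagE_oo fillE_oo;
   rewrite diagE_lo fillE_lo].
rewrite wordE_l exists_liftE diagE_ll fillE_ll.
under eq_existsb => r do rewrite diagE_ol fillE_ol.
under eq_forallb => j do rewrite andbF orbF.
by case: b => //=; rewrite orbC.
Qed.

Lemma diagonal_ok_extend : diagonal_ok E =
  diagonal_ok T && [forall j, (b && (j \in C)) ==> (T.1 j ==> T.2 (j, j))].
Proof.
rewrite /diagonal_ok /= forall_liftE.
under eq_forallb => j do
  [rewrite wordE_o fillE_oo forall_liftE;
   under eq_forallb => j' do rewrite diagE_oo fillE_oo; rewrite diagE_ol fillE_ol].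
rewrite wordE_l fillE_ll forall_liftE diagE_ll fillE_ll.
have -> (P : pred 'I_n) : [forall j, in_diag (extend_word T b) ord_max (old j) ==> P j].
  by apply/forallP => j; rewrite diagE_lo.
have -> : b && ~~ (b && d) ==> (b ==> ~~ (b && d)) by case: b; case: d.
rewrite andbT.
under eq_forallb => j do rewrite implyb_andr.
rewrite forall_andb; congr (_ && _); apply: eq_forallb => j.
by case: b; case: (T.1 j); case: (T.2 (j, j)); case: (j \in C).
Qed.

Lemma one_above_extend_oo r j : one_above E (old r) (old j) = one_above T r j.
Proof.
rewrite /one_above /= exists_liftE diagE_lo /= orbF.
by apply: eq_existsb => r'; rewrite diagE_oo aboveE_oo fillE_oo.
Qed.

Lemma one_above_extend_ol r : one_above E (old r) ord_max =
  b && ([exists r', row_above T.1 r' r && (r' \in C)] || d).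
Proof.
rewrite /one_above /= exists_liftE diagE_ll aboveE_lo fillE_ll.
under eq_existsb => r' do rewrite diagE_ol aboveE_oo fillE_ol.
by case: b => /=; [rewrite ?orbF | rewrite orbF; apply/existsP => -[]].
Qed.

Lemma one_above_extend_ll : one_above E ord_max ord_max = false.
Proof.
rewrite /one_above /= exists_liftE aboveE_ll andbF orbF.
by apply/existsP => -[r']; rewrite aboveE_ol diagE_ol; case: b.
Qed.

(* The new column lies to the left of every old cell. *)
Lemma one_left_extend_oo r j :
  one_left E (old r) (old j) = one_left T r j || (b && (r \in C)).
Proof.
rewrite /one_left /= exists_liftE diagE_ol ltE_ol fillE_ol /=.
congr (_ || _); last by case: b.
by apply: eq_existsb => j'; rewrite diagE_oo ltE_oo fillE_oo.
Qed.

Lemma one_left_extend_last (r : 'I_n.+1) : one_left E r ord_max = false.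
Proof.
rewrite /one_left /= exists_liftE ltnn andbF orbF.
by apply/existsP => -[j']; rewrite ltE_lo andbF.
Qed.

Lemma zeros_ok_extend :
  zeros_ok E = zeros_ok T && [forall r, (b && (r \in C)) ==> clear_above T r].
Proof.
have last_col r : zero_ok E r ord_max by rewrite /zero_ok one_left_extend_last andbF implybT.
have last_row j : zero_ok E ord_max (old j) by rewrite /zero_ok diagE_lo.
rewrite /zeros_ok forall_liftE forall_liftE last_col andbT.
under [X in _ && X]eq_forallb => j do rewrite last_row.
rewrite forall_trueb andbT.
under [X in X = _]eq_forallb => r do rewrite forall_liftE last_col andbT.
rewrite -forall_andb; apply: eq_forallb => r.
have -> : (b && (r \in C) ==> clear_above T r) = [forall j, b && (r \in C) ==>
    ((in_diag T.1 r j && ~~ T.2 (r, j)) ==> ~~ one_above T r j)].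
  by rewrite /clear_above; case: (b && _) => //; rewrite forall_trueb.
rewrite -forall_andb; apply: eq_forallb => j; rewrite /zero_ok diagE_oo fillE_oo.
rewrite one_above_extend_oo one_left_extend_oo.
by case: (_ && _); case: (b && _); case: (one_above T r j); case: (one_left T r j).
Qed.

Lemma typeB_extend : typeB_tableau E =
  [&& typeB_tableau T, b ==> (d || [exists r, r \in C]) &
      [forall r, (b && (r \in C)) ==> free_row T r]].
Proof.
rewrite !typeBE supported_extend columns_nonzero_extend zeros_ok_extend diagonal_ok_extend.
have -> : [forall r, (b && (r \in C)) ==> free_row T r] =
   [forall r, (b && (r \in C)) ==> clear_above T r] &&
   [forall j, (b && (j \in C)) ==> (T.1 j ==> T.2 (j, j))].
  rewrite -forall_andb; apply: eq_forallb => r.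
  by rewrite /free_row; case: (_ && _) => //=; rewrite andbC.
by case: (supported T); case: (columns_nonzero T); case: (zeros_ok T);
   case: (diagonal_ok T); case: (b ==> _); case: [forall r, _ ==> clear_above T r];
   case: [forall j, _ ==> (_ ==> _)].
Qed.

Lemma free_row_extend_old r : free_row E (old r) =
  free_row T r &&
  ((b && (r \notin C)) ==> ~~ ([exists r', row_above T.1 r' r && (r' \in C)] || d)).
Proof.
rewrite /free_row wordE_o fillE_oo /clear_above forall_liftE.
rewrite one_above_extend_ol diagE_ol fillE_ol /=.
under [X in _ && (X && _) = _]eq_forallb => j do rewrite diagE_oo fillE_oo one_above_extend_oo.
by case: b => //=; rewrite ?andbT //; case: (r \in C); rewrite /= ?andbT ?andbA.
Qed.

Lemma free_row_extend_last : free_row E ord_max = (b ==> d).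
Proof.
rewrite /free_row wordE_l fillE_ll /clear_above forall_liftE one_above_extend_ll.
rewrite diagE_ll fillE_ll.
under eq_forallb => j do rewrite diagE_lo.
by rewrite forall_trueb; case: b; case: d.
Qed.

End ExtensionConditions.

Definition admissible n (T : word n * filling n) (e : ext_data n) :=
  if e.1.1 then (e.1.2 || [exists r, r \in e.2]) && [forall r, (r \in e.2) ==> free_row T r]
  else ~~ e.1.2 && (e.2 == set0).

Section Fibers.
Variable n : nat.
Local Notation old := (lift (@ord_max n)).

Lemma restrict_extend (T : word n * filling n) (e : ext_data n) : restrict (extend T e) = T.
Proof.
case: T => w F; case: e => [[b d] C]; rewrite /restrict /extend /=.
congr pair; apply/ffunP => x; rewrite ffunE; first exact: wordE_o.
by case: x => r j; rewrite (fillE_oo (w, F)).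
Qed.

Lemma last_data_extend (T : word n * filling n) b d (C : {set 'I_n}) :
  last_data (extend T (b, d, C)) = (b, b && d, if b then C else set0).
Proof.
rewrite /last_data /extend /= wordE_l fillE_ll; congr pair.
by apply/setP => r; rewrite inE fillE_ol; case: b; rewrite ?inE.
Qed.

Lemma extend_restrict (t : word n.+1 * filling n.+1) :
  supported t -> extend (restrict t) (last_data t) = t.
Proof.
case: t => w F /= Hsupp; rewrite /extend /=; congr pair; apply/ffunP => x; rewrite ffunE.
  by case: (unliftP ord_max x) => [j|] ->; rewrite ?liftK ?unlift_none ?ffunE.
have outside r j : ~~ in_diag w r j -> F (r, j) = false.
  by move=> H; apply/negbTE; move/forallP: Hsupp => /(_ r)/forallP/(_ j)/implyP; apply.
case: x => r j /=.
case: (unliftP ord_max r) => [r0|] ->; case: (unliftP ord_max j) => [j0|] ->;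
  rewrite ?liftK ?unlift_none ?ffunE ?inE //=.
- by case: (boolP (w ord_max)) => // Hw; rewrite outside // /in_diag (negbTE Hw).
- by rewrite outside // /in_diag old_val /= leqNgt ltn_ord andbF.
- by case: (boolP (w ord_max)) => // Hw; rewrite outside // /in_diag (negbTE Hw).
Qed.

(* Extending by admissible data is a bijection onto B_{n+1}, inverse to
   (restrict, last_data). *)
Lemma extend_admissibleP (T : word n * filling n) (e : ext_data n) :
  typeB_tableau (extend T e) && ((restrict (extend T e), last_data (extend T e)) == (T, e))
  = typeB_tableau T && admissible T e.
Proof.
case: e => [[b d] C]; rewrite restrict_extend last_data_extend typeB_extend /admissible /=.
apply/idP/idP.
- case/andP => /and3P [-> H1 H2] /eqP [] Hd HC.
  case: b Hd HC H1 H2 => /= [_ _ -> /forallP H2|<- <- _ _]; last by rewrite eqxx.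
  by apply/forallP => r; apply: H2.
- case/andP => ->; case: b => /= [/andP [-> ->]|/andP [/negbTE -> /eqP ->]];
  by rewrite ?forall_trueb eqxx.
Qed.

Lemma sum_fibers (F : word n.+1 * filling n.+1 -> nat) :
  \sum_(t in B_set n.+1) F t = \sum_(T in B_set n) \sum_(e | admissible T e) F (extend T e).
Proof.
rewrite pair_big_dep (reindex_onto (fun p => extend p.1 p.2) (fun t => (restrict t, last_data t))) /=.
  by apply: eq_bigl => -[T e] /=; rewrite !inE extend_admissibleP.
by move=> t; rewrite inE typeBE => /and4P [H _ _ _]; apply: extend_restrict.
Qed.

End Fibers.

Lemma sum_subsets_split (X : finType) (F : {set X} -> nat) (a0 : X) (A : {set X}) :
  a0 \in A ->
  \sum_(C : {set X} | C \subset A) F C =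
  \sum_(C : {set X} | C \subset A :\ a0) F C + \sum_(C : {set X} | C \subset A :\ a0) F (a0 |: C).
Proof.
move=> Ha0; rewrite (bigID (fun C : {set X} => a0 \in C)) addnC; congr (_ + _); last first.
  by apply: eq_bigl => C; rewrite subsetD1.
rewrite (reindex_onto (fun C => a0 |: C) (fun C => C :\ a0)); last first.
  by move=> C /andP [_ H]; rewrite setD1K.
apply: eq_bigl => C; rewrite setU11 andbT subUset sub1set Ha0 /= subsetD1; congr (_ && _).
apply/eqP/idP => [<-|H]; first by rewrite !inE eqxx.
by apply/setP => x; rewrite !inE; case: (eqVneq x a0) => // ->; rewrite (negbTE H).
Qed.

Lemma sum_subsets_card (X : finType) (A : {set X}) (F : nat -> nat) :
  \sum_(C : {set X} | C \subset A) F #|C| = \sum_(i < #|A|.+1) 'C(#|A|, i) * F i.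
Proof.
rewrite (partition_big (fun C : {set X} => (inord #|C| : 'I_#|A|.+1)) xpredT) //=.
apply: eq_bigr => i _.
rewrite (eq_bigl (fun C : {set X} => (C \subset A) && (#|C| == i))); last first.
  move=> C /=; case: (boolP (C \subset A)) => //= HC.
  have Hle : #|C| <= #|A| by apply: subset_leq_card.
  apply/eqP/eqP => [<-|E]; first by rewrite inordK.
  by apply: val_inj; rewrite /= inordK // E.
rewrite (eq_bigr (fun _ => F i)); last by move=> C /andP [_ /eqP ->].
by rewrite sum_nat_const -cards_draws; congr (_ * _); apply: eq_card => C; rewrite !inE.
Qed.

Section UpperCount.
Variables (X : finType) (rk : X -> nat).
Hypothesis rk_inj : injective rk.

Definition upper_count (A C : {set X}) :=
  #|[set r in A | (r \in C) || ~~ [exists r', (rk r' < rk r) && (r' \in C)]]|.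

Section MinimalElement.
Variables (A : {set X}) (a0 : X).
Hypothesis a0_in : a0 \in A.
Hypothesis a0_min : forall r, r \in A -> r != a0 -> rk a0 < rk r.

Lemma upper_count_add_min (C : {set X}) :
  C \subset A :\ a0 -> upper_count A (a0 |: C) = #|C|.+1.
Proof.
move=> HC; have a0C : a0 \notin C by apply/negP => /(subsetP HC); rewrite !inE eqxx.
rewrite /upper_count (_ : [set r in A | _] = a0 |: C) ?cardsU1 ?a0C //.
apply/setP => r; rewrite !inE; case: (eqVneq r a0) => [->|Hne] /=; first by rewrite a0_in.
case: (boolP (r \in C)) => HrC /=; first by have := subsetP HC r HrC; rewrite !inE => /andP [_ ->].
case: (boolP (r \in A)) => //= HrA.
by apply: negbF; apply/existsP; exists a0; rewrite (a0_min HrA Hne) !inE eqxx.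
Qed.

Lemma upper_count_drop_min (C : {set X}) :
  C \subset A :\ a0 -> upper_count A C = (upper_count (A :\ a0) C).+1.
Proof.
move=> HC; have a0C : a0 \notin C by apply/negP => /(subsetP HC); rewrite !inE eqxx.
rewrite /upper_count (_ : [set r in A | _] = a0 |: [set r in A :\ a0 |
    (r \in C) || ~~ [exists r', (rk r' < rk r) && (r' \in C)]]).
  by rewrite cardsU1 !inE eqxx.
apply/setP => r; rewrite !inE; case: (eqVneq r a0) => [->|Hne] //=.
rewrite a0_in (negbTE a0C) /=.
apply/negP => /existsP [r' /andP [Hlt Hr']].
have := subsetP HC r' Hr'; rewrite !inE => /andP [Hne' HAr'].
by have := a0_min HAr' Hne'; rewrite ltnNge (ltnW Hlt).
Qed.

End MinimalElement.

(* Proved by removing the rk-minimal element of A. *)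
Lemma sum_extensions_upper_count (A : {set X}) (g : nat -> nat) :
  g #|A|.+1 + \sum_(C : {set X} | (C \subset A) && (C != set0)) g (upper_count A C) =
  \sum_(C : {set X} | C \subset A) g #|C|.+1.
Proof.
move: {2}#|A| (erefl #|A|) => m; elim: m A g => [|m IH] A g HA.
  move/cards0_eq: (HA) => ->; rewrite cards0 big_pred0 => [|C]; last by rewrite subset0 andbN.
  by rewrite (big_pred1 set0) => [|C]; rewrite ?subset0 // cards0 addn0.
have [x0 Hx0] : exists x0, x0 \in A by apply/set0Pn; rewrite -card_gt0 HA.
pose a0 := [arg min_(a < x0 in A) rk a].
have a0_in : a0 \in A by rewrite /a0; case: arg_minnP.
have a0_min r : r \in A -> r != a0 -> rk a0 < rk r.
  move=> Hr; rewrite /a0; case: arg_minnP => // a Ha Hle Hne.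
  rewrite ltn_neqAle Hle // andbT; apply/eqP => /rk_inj E.
  by move: Hne; rewrite -E eqxx.
have HA' : #|A :\ a0| = m by move: HA; rewrite (cardsD1 a0) a0_in => -[].
rewrite big_mkcondr !(sum_subsets_split _ a0_in).
under [X in _ + (_ + X) = _]eq_bigr => C HC.
  rewrite (_ : (a0 |: C != set0) = true); last by apply/set0Pn; exists a0; rewrite setU11.
  rewrite upper_count_add_min //; over.
under [X in _ + (X + _) = _]eq_bigr => C HC do rewrite (upper_count_drop_min a0_in a0_min) //.
under [X in _ = _ + X]eq_bigr => C HC do
  rewrite cardsU1 (contra (subsetP HC a0)) ?inE ?eqxx // add1n.
rewrite -big_mkcondr addnA -(IH (A :\ a0) (fun x => g x.+1)) //.
by rewrite HA HA' addnC.
Qed.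

End UpperCount.

(* A numbering of the rows compatible with row_above: West rows first in
   decreasing step order, then South rows in increasing step order. *)
Definition row_rank n (w : word n) (r : 'I_n) : nat := if w r then n - r else n + r + 1.

Lemma row_above_rank n (w : word n) r r' : row_above w r r' = (row_rank w r < row_rank w r').
Proof.
rewrite /row_above /row_rank; have := ltn_ord r; have := ltn_ord r'.
by case: (w r); case: (w r') => /= Hr' Hr; apply/idP/idP; lia.
Qed.

Lemma row_rank_inj n (w : word n) : injective (row_rank w).
Proof.
move=> r r'; rewrite /row_rank; have := ltn_ord r; have := ltn_ord r'.
by case: (w r); case: (w r') => /= Hr' Hr E; apply: val_inj => /=; lia.
Qed.

Section FreeRowsOfExtensions.
Variables (n : nat) (T : word n * filling n).

Lemma nfree_extend_south : nfree (extend T (false, false, set0)) = (nfree T).+1.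
Proof.
rewrite /nfree /free_rows card_liftE free_row_extend_last addn1; congr _.+1.
by apply: eq_card => r; rewrite !inE free_row_extend_old andbT.
Qed.

Lemma nfree_extend_diag1 (C : {set 'I_n}) :
  C \subset free_rows T -> nfree (extend T (true, true, C)) = #|C|.+1.
Proof.
move=> HC; rewrite /nfree /free_rows card_liftE free_row_extend_last addn1; congr _.+1.
apply: eq_card => r; rewrite !inE free_row_extend_old orbT /=.
case: (boolP (r \in C)) => Hr; last by rewrite andbF.
by have := subsetP HC r Hr; rewrite inE => ->.
Qed.

Lemma nfree_extend_diag0 (C : {set 'I_n}) :
  nfree (extend T (true, false, C)) = upper_count (row_rank T.1) (free_rows T) C.
Proof.
rewrite /nfree /free_rows card_liftE free_row_extend_last addn0 /upper_count.
apply: eq_card => r; rewrite !inE free_row_extend_old orbF /=.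
congr (_ && _); case: (r \in C) => //=.
by congr (~~ _); apply: eq_existsb => r'; rewrite row_above_rank.
Qed.

End FreeRowsOfExtensions.

Lemma sum_triple n (G : ext_data n -> nat) :
  \sum_(e : ext_data n) G e = \sum_(b : bool) \sum_(d : bool) \sum_(C : {set 'I_n}) G (b, d, C).
Proof.
rewrite (eq_bigr (fun b => \sum_(p : bool * {set 'I_n}) G (b, p.1, p.2))); last first.
  by move=> b _; rewrite pair_bigA.
rewrite pair_bigA (reindex (fun e : ext_data n => (e.1.1, (e.1.2, e.2)))) /=.
  by apply: eq_bigr => -[[b d] C].
by exists (fun p : bool * (bool * {set 'I_n}) => (p.1, p.2.1, p.2.2)) => [[[b d] C]|[b [d C]]].
Qed.

Lemma subset_free_rowsE n (T : word n * filling n) (C : {set 'I_n}) :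
  [forall r, (r \in C) ==> free_row T r] = (C \subset free_rows T).
Proof.
apply/forallP/subsetP => [H r Hr|H r]; first by rewrite inE; exact: (implyP (H r)).
by apply/implyP => /H; rewrite inE.
Qed.

Lemma sum_admissible n (T : word n * filling n) (F : ext_data n -> nat) :
  \sum_(e | admissible T e) F e =
  F (false, false, set0) + \sum_(C : {set 'I_n} | C \subset free_rows T) F (true, true, C)
  + \sum_(C : {set 'I_n} | (C \subset free_rows T) && (C != set0)) F (true, false, C).
Proof.
rewrite big_mkcond sum_triple !big_bool /= big1_eq add0n.
have -> : \sum_(C : {set 'I_n}) (if admissible T (false, false, C) then F (false, false, C) else 0)
          = F (false, false, set0).
  rewrite (bigD1 set0) //= {1}/admissible /= eqxx big1 ?addn0 //.
  by move=> C HC; rewrite /admissible /= (negbTE HC).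
rewrite addnC addnA; congr (_ + _ + _); rewrite [RHS]big_mkcond; apply: eq_bigr => C _.
  by rewrite /admissible /= subset_free_rowsE.
rewrite /admissible /= subset_free_rowsE andbC.
by rewrite (_ : [exists r, r \in C] = (C != set0)) //; apply/existsP/set0Pn.
Qed.

Lemma fiber_weight n (T : word n * filling n) (g : nat -> nat) :
  \sum_(e | admissible T e) g (nfree (extend T e)) =
  2 * \sum_(C : {set 'I_n} | C \subset free_rows T) g #|C|.+1.
Proof.
rewrite sum_admissible nfree_extend_south.
under eq_bigr => C HC do rewrite nfree_extend_diag1 //.
under [X in _ + X = _]eq_bigr => C HC do rewrite nfree_extend_diag0.
rewrite -addnA addnC -addnA [X in _ + X]addnC.
by rewrite (sum_extensions_upper_count (@row_rank_inj n T.1)) mul2n addnn.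
Qed.

Lemma fiber_weight_event n (T : word n * filling n) (g : nat -> nat) :
  \sum_(e | admissible T e) (e.1.1 && e.1.2) * g (nfree (extend T e)) =
  \sum_(C : {set 'I_n} | C \subset free_rows T) g #|C|.+1.
Proof.
rewrite sum_admissible /= mul0n add0n [X in _ + X]big1 ?addn0; last by move=> *; rewrite mul0n.
by apply: eq_bigr => C HC; rewrite mul1n nfree_extend_diag1.
Qed.

Lemma sum_mul_indicator (I : finType) (A : {set I}) (P : pred I) (G : I -> nat) :
  \sum_(t in A | P t) G t = \sum_(t in A) P t * G t.
Proof. by rewrite big_mkcondr; apply: eq_bigr => t _; case: (P t); rewrite ?mul1n ?mul0n. Qed.

(* The weighted form of the theorem, which is what the induction needs. *)
Lemma event_weight_half n (k : 'I_n) (g : nat -> nat) :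
  2 * \sum_(t in B_set n | t.1 k && t.2 (k, k)) g (nfree t) = \sum_(t in B_set n) g (nfree t).
Proof.
elim: n k g => [|n IH] k g; first by case: k.
rewrite sum_mul_indicator !sum_fibers.
case: (unliftP ord_max k) => [k'|] -> /=.
- (* k is an old step: the event is read off T, and the fiber sums are a
     new weight of nfree T. *)
  under eq_bigr => T _ do under eq_bigr => e _ do rewrite wordE_o fillE_oo.
  under eq_bigr => T _ do rewrite -big_distrr fiber_weight /= (sum_subsets_card _ (fun x => g x.+1)).
  under [RHS]eq_bigr => T _ do rewrite fiber_weight /= (sum_subsets_card _ (fun x => g x.+1)).
  rewrite -sum_mul_indicator.
  exact: (IH k' (fun m => 2 * \sum_(i < m.+1) 'C(m, i) * g i.+1)).
- (* k is the last step: the event is the condition b && d on the data. *)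
  under eq_bigr => T _ do under eq_bigr => e _ do rewrite wordE_l fillE_ll andbA andbb.
  under eq_bigr => T _ do rewrite fiber_weight_event.
  by rewrite big_distrr /=; apply: eq_bigr => T _; rewrite fiber_weight.
Qed.

(* The empty filling of the all-South path is a tableau. *)
Lemma B_set_nonempty n : 0 < #|B_set n|.
Proof.
apply/card_gt0P; exists ([ffun _ => false], [ffun _ => false]).
rewrite inE typeBE /supported /columns_nonzero /zeros_ok /zero_ok /diagonal_ok /= /in_diag.
by apply/and4P; split; apply/forallP => r; rewrite ?ffunE //; apply/forallP => j; rewrite ?ffunE.
Qed.

Lemma card_B_set_event n (k : 'I_n) : #|B_set n| = 2 * #|west_diag1 k|.
Proof.
have := event_weight_half k (fun _ => 1); rewrite !sum1_card => <-.
by congr (_ * _); apply: eq_card => t; rewrite unfold_in /= inE /west_diag1 !inE.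
Qed.

Theorem mainTheorem6 (n : nat) (k : 'I_n) :
  probB (west_diag1 k) = (1 / 2)%R.
Proof.
have event_in_B : west_diag1 k :&: B_set n = west_diag1 k.
  by apply/setIidPl/subsetP => t; rewrite !inE => /andP [-> _].
have event_pos : (#|west_diag1 k|%:R : rat) != 0%R.
  by have := B_set_nonempty n; rewrite (card_B_set_event k) muln_gt0 pnatr_eq0 -lt0n.
rewrite /probB event_in_B (card_B_set_event k) natrM invfM mulrA mulrAC mulfV //.
Qed.
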